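(* Let $A$ be a Noetherian commutative ring with identity, let $A[\mathbf{x}]=A[x_1,\ldots,x_n]$ be equipped with a monomial order, let $I\subset A[\mathbf{x}]$ be an ideal, let $M=A[\mathbf{x}]/I$, and let $p\subset A$ be a prime ideal. The following two statements are equivalent: (a) the natural map $f:A_p\to M_p$ is surjective; (b) $\mathrm{in}(I)_{x_i}\,A_p=(1)$ for each $i=1,\ldots,n$.
   Context: A monomial order $>$ is a total order on monomials such that $\mathbf{x}^E>\mathbf{x}^F$ implies $\mathbf{x}^G\mathbf{x}^E>\mathbf{x}^G\mathbf{x}^F$, and $x_i>1$ for each $i$. $\mathrm{in}(f)$ is the greatest term $c\,\mathbf{x}^E$ ($c\neq0$) of a nonzero polynomial $f$; $\mathrm{in}(I)$ is the ideal generated by all $\mathrm{in}(f)$, $f\in I$. For an ideal $J\subset A[\mathbf{x}]$ and monomial $\mathbf{x}^E$, the coefficient ideal is $J_{\mathbf{x}^E}=(c\in A\mid c\,\mathbf{x}^E\in J)\subset A$; $J_{x_i}$ is the coefficient ideal for the monomial $x_i$, and $J_{x_i}A_p$ its extension to $A_p$. *)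

From HB Require Import structures.
From mathcomp Require Import all_boot all_algebra.
From mathcomp Require Export mpoly.
Set Implicit Arguments. Unset Strict Implicit. Unset Printing Implicit Defensive.
Import GRing.Theory.
Local Open Scope ring_scope.

Definition is_ideal (R : comNzRingType) (I : R -> Prop) : Prop :=
  [/\ I 0, (forall a b, I a -> I b -> I (a + b)) & (forall r a, I a -> I (r * a))].

Definition ideal_generated_by (R : comNzRingType) (I : R -> Prop) (s : seq R) : Prop :=
  forall x, I x <-> exists c : seq R, x = \sum_(i < size s) c`_i * s`_i.

Definition noetherian (R : comNzRingType) : Prop :=
  forall I : R -> Prop, is_ideal I -> exists s : seq R, ideal_generated_by I s.

Definition is_prime_ideal (R : comNzRingType) (p : R -> Prop) : Prop :=
  [/\ is_ideal p, ~ p 1 & (forall a b, p (a * b) -> p a \/ p b)].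

Definition monomial_order (n : nat) (gt : 'X_{1..n} -> 'X_{1..n} -> Prop) : Prop :=
  [/\ (forall E, ~ gt E E),
      (forall E F G, gt E F -> gt F G -> gt E G),
      (forall E F, E <> F -> gt E F \/ gt F E),
      (forall E F G, gt E F -> gt (mnm_add G E) (mnm_add G F))
    & (forall i : 'I_n, gt (mnm1 i) (@mnm0 n))].

Definition is_init_term (A : comNzRingType) (n : nat)
    (gt : 'X_{1..n} -> 'X_{1..n} -> Prop) (f t : {mpoly A[n]}) : Prop :=
  f != 0 /\
  exists2 E, E \in msupp f &
    (forall F, F \in msupp f -> F <> E -> gt E F) /\ t = f@_E *: 'X_[E].

Definition init_ideal (A : comNzRingType) (n : nat)
    (gt : 'X_{1..n} -> 'X_{1..n} -> Prop) (I : {mpoly A[n]} -> Prop)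
    (g : {mpoly A[n]}) : Prop :=
  exists s : seq ({mpoly A[n]} * {mpoly A[n]}),
    (forall pr, pr \in s -> exists2 f, I f & is_init_term gt f pr.2) /\
    g = \sum_(pr <- s) pr.1 * pr.2.

Definition coef_ideal (A : comNzRingType) (n : nat) (J : {mpoly A[n]} -> Prop)
    (E : 'X_{1..n}) (c : A) : Prop :=
  J (c *: 'X_[E]).

(* Localization A_p: fractions a/s (s not in p); a/s = b/t iff
   exists u not in p with u (t a - s b) = 0. *)
Definition loc_eq (A : comNzRingType) (p : A -> Prop) (a s b t : A) : Prop :=
  exists2 u, ~ p u & u * (t * a - s * b) = 0.

(* Extension J A_p = { a/s | a in J, s not in p }; it is (1) iff it contains 1/1. *)
Definition ext_is_unit (A : comNzRingType) (p : A -> Prop) (J : A -> Prop) : Prop :=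
  exists a s, [/\ J a, ~ p s & loc_eq p a s 1 1].

(* Localization of M = A[x]/I at p: fractions m/s with m in A[x] (representing
   its class in M), s not in p; m/s = m'/s' iff exists u not in p with
   u (s' m - s m') in I (i.e. zero in M). *)
Definition locM_eq (A : comNzRingType) (n : nat) (I : {mpoly A[n]} -> Prop)
    (p : A -> Prop) (m : {mpoly A[n]}) (s : A) (m' : {mpoly A[n]}) (s' : A) : Prop :=
  exists2 u, ~ p u & I (u *: (s' *: m - s *: m')).

Definition loc_map_surjective (A : comNzRingType) (n : nat)
    (I : {mpoly A[n]} -> Prop) (p : A -> Prop) : Prop :=
  forall (m : {mpoly A[n]}) (s : A), ~ p s ->
    exists a t, ~ p t /\ locM_eq I p (a%:MP) t m s.

(* If the natural map A_p -> M_p is onto, each x_i satisfies a relation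
   w x_i - a in I with w outside p; since x_i > 1 its initial term is w x_i, so
   w lies in in(I)_{x_i}.  Conversely, if c x_i is in in(I) with c outside p,
   then I contains an element c x_i + (terms below x_i).  Every variable
   dividing a monomial below x_i is itself below x_i, so by induction along the
   (finite, strict) order of the variables all of them are constants in M_p,
   and then so is x_i. *)
From mathcomp Require Import all_boot all_algebra.
From mathcomp Require Import mpoly.
From mathcomp Require Import ring.
Set Implicit Arguments. Unset Strict Implicit. Unset Printing Implicit Defensive.
Import GRing.Theory.
Local Open Scope ring_scope.

Section Ideal.
Variables (R : comNzRingType) (J : R -> Prop).
Hypothesis idealJ : is_ideal J.

Lemma ideal0 : J 0. Proof. by case: idealJ. Qed.

Lemma idealD a b : J a -> J b -> J (a + b).
Proof. by case: idealJ => _ + _; apply. Qed.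

Lemma idealMl r a : J a -> J (r * a).
Proof. by case: idealJ => _ _; apply. Qed.

Lemma idealN a : J a -> J (- a).
Proof. by rewrite -mulN1r; apply: idealMl. Qed.

End Ideal.

Lemma idealZ (A : comNzRingType) n (J : {mpoly A[n]} -> Prop) c m :
  is_ideal J -> J m -> J (c *: m).
Proof. by rewrite -mul_mpolyC => idealJ; apply: idealMl. Qed.

Section PrimeIdeal.
Variables (R : comNzRingType) (p : R -> Prop).
Hypothesis prime_p : is_prime_ideal p.

Lemma prime_ideal0 : p 0. Proof. by case: prime_p => -[]. Qed.

Lemma prime_ideal_not1 : ~ p 1. Proof. by case: prime_p. Qed.

Lemma prime_ideal_complM a b : ~ p a -> ~ p b -> ~ p (a * b).
Proof. by case: prime_p => _ _ pM pa pb /pM[]. Qed.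

Lemma ext_is_unitP (J : R -> Prop) : ext_is_unit p J <-> exists2 c, J c & ~ p c.
Proof.
split=> [[a [s [Ja ps [u pu]]]]|[c Jc pc]]; last first.
  exists c, c; split=> //; exists 1; first exact: prime_ideal_not1.
  by rewrite !(mul1r, mulr1) subrr.
rewrite mul1r mulr1 mulrBr => /eqP; rewrite subr_eq0 => /eqP uas.
exists a => // pa; apply: (prime_ideal_complM pu ps).
by rewrite -uas; case: prime_p => idp _ _; apply: idealMl.
Qed.

End PrimeIdeal.

Lemma strict_order_well_founded (T : finType) (R : T -> T -> Prop) :
  (forall x, ~ R x x) -> (forall x y z, R x y -> R y z -> R x z) ->
  well_founded R.
Proof.
move=> irrR transR x.
suff: forall k (S : {set T}), (#|S| <= k)%N ->
    forall x, (forall y, R y x -> y \in S) -> Acc R x.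
  by apply=> //; move=> y _; rewrite inE.
elim=> [|k IH] S cardS {}x belowS; constructor=> y yx.
  by move: cardS (belowS y yx); rewrite leqn0 cards_eq0 => /eqP ->; rewrite inE.
apply: (IH (S :\ y)) => [|z zy].
  by move: cardS; rewrite (cardsD1 y S) belowS.
rewrite in_setD1 (belowS z (transR _ _ _ zy yx)) andbT.
by apply/eqP=> ezy; apply: (irrR y); rewrite -{1}ezy.
Qed.

Section MonomialOrder.
Variables (n : nat) (gt : 'X_{1..n} -> 'X_{1..n} -> Prop).
Hypothesis order_gt : monomial_order gt.

Lemma gtxx E : ~ gt E E. Proof. by case: order_gt. Qed.

Lemma gt_trans E F G : gt E F -> gt F G -> gt E G.
Proof. by case: order_gt => _ + _ _ _; apply. Qed.

Lemma gt_addl E F G : gt E F -> gt (mnm_add G E) (mnm_add G F).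
Proof. by case: order_gt => _ _ _ + _; apply. Qed.

Lemma gt_mnm1_0 i : gt (mnm1 i) (@mnm0 n).
Proof. by case: order_gt. Qed.

Lemma gt_add_pos E G : gt E mnm0 -> gt (mnm_add G E) G.
Proof. by move=> /(gt_addl G); rewrite addm0. Qed.

Lemma mnm_split_var (G : 'X_{1..n}) j : (0 < G j)%N ->
  G = mnm_add (mnm_sub G (mnm1 j)) (mnm1 j).
Proof. by move=> Gj; rewrite submK // lep1mP -lt0n. Qed.

Lemma ge_mnm0 (G : 'X_{1..n}) : G = mnm0 \/ gt G mnm0.
Proof.
elim: {G}(mdeg G) {-2}G (erefl (mdeg G)) => [|k IH] G degG.
  by left; apply/eqP; rewrite -mdeg_eq0 degG.
have [j Gj] : exists j, (0 < G j)%N.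
  apply/existsP; apply: contraTT (isT : (0 < k.+1)%N) => /existsPn G0.
  rewrite -degG lt0n negbK mdeg_eq0; apply/eqP/mnmP => j.
  by move: (G0 j); rewrite mnm0E lt0n negbK => /eqP.
right; rewrite (mnm_split_var Gj) addmC.
have degG' : mdeg (mnm_sub G (mnm1 j)) = k.
  by move: degG; rewrite {1}(mnm_split_var Gj) mdegD mdeg1 addn1 => -[].
case: (IH _ degG') => [->|G'0]; first by rewrite addm0; exact: gt_mnm1_0.
exact: gt_trans (gt_add_pos _ G'0) (gt_mnm1_0 j).
Qed.

Lemma ge_mnm1 (G : 'X_{1..n}) j : (0 < G j)%N -> G = mnm1 j \/ gt G (mnm1 j).
Proof.
move=> Gj; rewrite (mnm_split_var Gj) addmC.
case: (ge_mnm0 (mnm_sub G (mnm1 j))) => [->|G'0]; first by left; rewrite addm0.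
by right; exact: gt_add_pos.
Qed.

Lemma gt_var_well_founded : well_founded (fun j i : 'I_n => gt (mnm1 i) (mnm1 j)).
Proof.
apply: strict_order_well_founded => [i|i j k ji kj]; first exact: gtxx.
exact: gt_trans kj ji.
Qed.

Lemma is_init_termZXD (A : comNzRingType) (E : 'X_{1..n}) (w b : A) :
  gt E mnm0 -> w != 0 -> is_init_term gt (w *: 'X_[E] + b%:MP) (w *: 'X_[E]).
Proof.
move=> E0 w0.
have coefE F : (w *: 'X_[E] + b%:MP)@_F = w * (E == F)%:R + b * (F == mnm0)%:R.
  by rewrite mcoeffD mcoeffZ mcoeffX mcoeffC.
have E0' : (E == mnm0) = false by apply/eqP => E0e; move: E0; rewrite E0e; apply: gtxx.
have fE : (w *: 'X_[E] + b%:MP)@_E = w by rewrite coefE eqxx E0' mulr1 mulr0 addr0.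
split; first by apply: contra_neq w0 => f0; rewrite -fE f0 mcoeff0.
exists E; first by rewrite mcoeff_msupp fE.
split; last by rewrite fE.
move=> F; rewrite mcoeff_msupp coefE => + FE.
have -> : (E == F) = false by apply/eqP => EF; apply: FE.
by rewrite mulr0 add0r; case: (eqVneq F mnm0) => [-> | _]; rewrite ?mulr0 ?eqxx.
Qed.

End MonomialOrder.

Section InitialIdeal.
Variables (A : comNzRingType) (n : nat) (gt : 'X_{1..n} -> 'X_{1..n} -> Prop).
Variables (I : {mpoly A[n]} -> Prop).
Hypotheses (order_gt : monomial_order gt) (idealI : is_ideal I).

Lemma init_ideal_init_term f t : I f -> is_init_term gt f t -> init_ideal gt I t.
Proof.
move=> If tf; exists [:: (1, t)]; split; last by rewrite big_seq1 mul1r.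
by move=> pr; rewrite inE => /eqP -> /=; exists f.
Qed.

Definition lift_below (E : 'X_{1..n}) (g : {mpoly A[n]}) : Prop :=
  exists h, [/\ I h, h@_E = g@_E & {in msupp h, forall G, G = E \/ gt E G}].

Lemma lift_below0 E : lift_below E 0.
Proof. by exists 0; split=> //; [exact: ideal0 | move=> G; rewrite msupp0]. Qed.

Lemma lift_belowD E g1 g2 :
  lift_below E g1 -> lift_below E g2 -> lift_below E (g1 + g2).
Proof.
move=> [h1 [Ih1 h1E h1b]] [h2 [Ih2 h2E h2b]]; exists (h1 + h2); split.
- exact: idealD.
- by rewrite !mcoeffD h1E h2E.
- move=> G; rewrite mcoeff_msupp mcoeffD.
  have [h1G|h1G _] := eqVneq h1@_G 0; last by apply: h1b; rewrite mcoeff_msupp.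
  by rewrite h1G add0r => h2G; apply: h2b; rewrite mcoeff_msupp.
Qed.

Lemma lift_below_sum E (T : eqType) (r : seq T) (F : T -> {mpoly A[n]}) :
  (forall x, x \in r -> lift_below E (F x)) -> lift_below E (\sum_(x <- r) F x).
Proof.
move=> liftF; rewrite big_seq_cond; apply: big_ind; first exact: lift_below0.
  exact: lift_belowD.
by move=> x /andP[+ _]; apply: liftF.
Qed.

Lemma lift_below_monomial_init E f t a F :
  I f -> is_init_term gt f t -> lift_below E ((a *: 'X_[F]) * t).
Proof.
move=> If [_ [Ef Ef_supp [Ef_max ->]]].
rewrite -scalerAl -scalerAr -mpolyXD scalerA.
have [FEf_E|FEf_E] := eqVneq (mnm_add F Ef) E; last first.
  exists 0; split=> //; first exact: ideal0.
    by rewrite mcoeff0 mcoeffZ mcoeffX (negbTE FEf_E) mulr0.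
  by move=> G; rewrite msupp0.
exists (a *: (f * 'X_[F])); split.
- by apply: idealZ => //; rewrite mulrC; apply: idealMl.
- by rewrite -FEf_E !mcoeffZ mcoeffMX mcoeffX eqxx mulr1.
- move=> G; rewrite mcoeff_msupp mcoeffZ => aG.
  have : G \in msupp (f * 'X_[F]).
    by rewrite mcoeff_msupp; apply: contraNneq aG => ->; rewrite mulr0.
  rewrite (perm_mem (msuppMX _ _)) => /mapP[G' G'f ->].
  have [->|G'Ef] := eqVneq G' Ef; first by left.
  by right; rewrite -FEf_E; apply: gt_addl => //; apply: Ef_max => //; apply/eqP.
Qed.

Lemma lift_below_init_ideal E g : init_ideal gt I g -> lift_below E g.
Proof.
case=> s [s_init ->]; apply: lift_below_sum => -[r t] /s_init[f If tf] /=.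
rewrite (mpolyE r) mulr_suml; apply: lift_below_sum => F _.
exact: lift_below_monomial_init If tf.
Qed.

Lemma init_ideal_monomial_lift c E : init_ideal gt I (c *: 'X_[E]) ->
  exists2 h, I h & {in msupp (h - c *: 'X_[E]), forall G, gt E G}.
Proof.
move=> /(lift_below_init_ideal E)[h [Ih hE h_below]]; exists h => // G.
rewrite mcoeff_msupp mcoeffB; have [<-|EG] := eqVneq E G; first by rewrite hE subrr eqxx.
rewrite mcoeffZ mcoeffX (negbTE EG) mulr0 subr0 -mcoeff_msupp => /h_below[GE|//].
by move: EG; rewrite GE eqxx.
Qed.

End InitialIdeal.

Section LocalConstant.
Variables (A : comNzRingType) (n : nat) (I : {mpoly A[n]} -> Prop) (p : A -> Prop).
Hypotheses (idealI : is_ideal I) (prime_p : is_prime_ideal p).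

(* [m / 1 = a / w] in [M_p]. *)
Definition loc_const (m : {mpoly A[n]}) : Prop :=
  exists a w, ~ p w /\ I (w *: m - a%:MP).

Lemma loc_const_ideal m : I m -> loc_const m.
Proof.
by exists 0, 1; split; [exact: prime_ideal_not1 | rewrite scale1r mpolyC0 subr0].
Qed.

Lemma loc_constC c : loc_const c%:MP.
Proof.
exists c, 1; split; first exact: prime_ideal_not1.
by rewrite scale1r subrr; exact: ideal0.
Qed.

Lemma loc_constN m : loc_const m -> loc_const (- m).
Proof.
move=> [a [w [pw Im]]]; exists (- a), w; split=> //.
by rewrite scalerN mpolyCN -opprD; apply: (idealN idealI).
Qed.

Lemma loc_constD m1 m2 : loc_const m1 -> loc_const m2 -> loc_const (m1 + m2).
Proof.
move=> [a1 [w1 [pw1 Im1]]] [a2 [w2 [pw2 Im2]]].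
exists (w2 * a1 + w1 * a2), (w1 * w2); split; first exact: prime_ideal_complM.
have -> : (w1 * w2) *: (m1 + m2) - (w2 * a1 + w1 * a2)%:MP =
    w2 *: (w1 *: m1 - a1%:MP) + w1 *: (w2 *: m2 - a2%:MP).
  by rewrite -!mul_mpolyC !mpolyCD !mpolyCM; ring.
by apply: (idealD idealI); apply: idealZ.
Qed.

Lemma loc_constM m1 m2 : loc_const m1 -> loc_const m2 -> loc_const (m1 * m2).
Proof.
move=> [a1 [w1 [pw1 Im1]]] [a2 [w2 [pw2 Im2]]].
exists (a1 * a2), (w1 * w2); split; first exact: prime_ideal_complM.
have -> : (w1 * w2) *: (m1 * m2) - (a1 * a2)%:MP =
    (w2 *: m2) * (w1 *: m1 - a1%:MP) + a1%:MP * (w2 *: m2 - a2%:MP).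
  by rewrite -!mul_mpolyC !mpolyCM; ring.
by apply: (idealD idealI); apply: idealMl.
Qed.

Lemma loc_constZ_cancel c m : ~ p c -> loc_const (c *: m) -> loc_const m.
Proof.
move=> pc [a [w [pw Im]]]; exists a, (w * c); split; first exact: prime_ideal_complM.
by rewrite -scalerA.
Qed.

Lemma loc_const1 : loc_const 1.
Proof. by rewrite -mpolyC1; apply: loc_constC. Qed.

Lemma loc_constX m k : loc_const m -> loc_const (m ^+ k).
Proof.
move=> mconst; elim: k => [|k IH]; first by rewrite expr0; exact: loc_const1.
by rewrite exprS; apply: loc_constM.
Qed.

Lemma loc_const_monomial (G : 'X_{1..n}) :
  (forall j, (0 < G j)%N -> loc_const 'X_j) -> loc_const 'X_[G].
Proof.
move=> Gvars; rewrite mpolyXE_id; apply: big_ind => [||j _].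
- exact: loc_const1.
- exact: loc_constM.
have [->|/Gvars Xj] := posnP (G j); first by rewrite expr0; exact: loc_const1.
exact: loc_constX.
Qed.

Lemma loc_const_mpoly m :
  (forall G, G \in msupp m -> forall j, (0 < G j)%N -> loc_const 'X_j) ->
  loc_const m.
Proof.
move=> mvars; rewrite (mpolyE m) big_seq; apply: big_ind => [||G mG].
- by rewrite -mpolyC0; apply: loc_constC.
- exact: loc_constD.
rewrite -mul_mpolyC; apply: loc_constM; first exact: loc_constC.
by apply: loc_const_monomial; apply: mvars.
Qed.

Lemma loc_map_surjectiveP : loc_map_surjective I p <-> forall m, loc_const m.
Proof.
split=> [onto m|all_const m s ps].
  have [a [t [pt [u pu Iu]]]] := onto m 1 (prime_ideal_not1 prime_p).
  exists (u * a), (u * t); split; first exact: prime_ideal_complM.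
  have -> : (u * t) *: m - (u * a)%:MP = - (u *: (1 *: a%:MP - t *: m)).
    by rewrite -!mul_mpolyC !mpolyCM mpolyC1; ring.
  exact: (idealN idealI).
have [a [w [pw Im]]] := all_const m.
exists a, (w * s); split; first exact: prime_ideal_complM.
exists 1; first exact: prime_ideal_not1.
have -> : 1 *: (s *: a%:MP - (w * s) *: m) = (- s) *: (w *: m - a%:MP).
  by rewrite -!mul_mpolyC !mpolyCM mpolyCN mpolyC1; ring.
exact: (idealZ _ idealI).
Qed.

End LocalConstant.

Section LocalConstantVariables.
Variables (A : comNzRingType) (n : nat) (gt : 'X_{1..n} -> 'X_{1..n} -> Prop).
Variables (I : {mpoly A[n]} -> Prop) (p : A -> Prop).
Hypotheses (order_gt : monomial_order gt) (idealI : is_ideal I).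
Hypothesis prime_p : is_prime_ideal p.

Lemma loc_const_var_init i : loc_const I p 'X_i ->
  exists2 c, init_ideal gt I (c *: 'X_[mnm1 i]) & ~ p c.
Proof.
move=> [a [w [pw Iw]]]; exists w => //.
have w0 : w != 0 by apply/eqP => w0; apply: pw; rewrite w0; exact: prime_ideal0.
apply: (init_ideal_init_term (f := w *: 'X_[mnm1 i] + (- a)%:MP)).
- by rewrite mpolyCN.
- exact: is_init_termZXD (gt_mnm1_0 order_gt i) w0.
Qed.

Hypothesis init_var : forall i : 'I_n,
  exists2 c, init_ideal gt I (c *: 'X_[mnm1 i]) & ~ p c.

Lemma loc_const_var i : loc_const I p 'X_i.
Proof.
elim/(well_founded_ind (gt_var_well_founded order_gt)): i => i IH.
have [c Ic pc] := init_var i.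
have [h Ih h_below] := init_ideal_monomial_lift order_gt idealI Ic.
apply: (loc_constZ_cancel prime_p pc).
have -> : c *: 'X_i = h - (h - c *: 'X_[mnm1 i]) by rewrite opprB addrC subrK.
apply: (loc_constD idealI prime_p); first exact: loc_const_ideal.
apply: (loc_constN idealI).
apply: (loc_const_mpoly idealI prime_p) => G /h_below iG j Gj.
by apply: IH; case: (ge_mnm1 order_gt Gj) => [<- //|]; exact: gt_trans.
Qed.

End LocalConstantVariables.

Theorem proposition5p1 (A : comNzRingType) (n : nat)
    (gt : 'X_{1..n} -> 'X_{1..n} -> Prop)
    (I : {mpoly A[n]} -> Prop) (p : A -> Prop) :
  noetherian A -> monomial_order gt -> is_ideal I -> is_prime_ideal p ->
  (loc_map_surjective I p <->
   (forall i : 'I_n, ext_is_unit p (coef_ideal (init_ideal gt I) (mnm1 i)))).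
Proof.
move=> _ order_gt idealI prime_p.
have unitP i := ext_is_unitP prime_p (coef_ideal (init_ideal gt I) (mnm1 i)).
split=> [/(loc_map_surjectiveP idealI prime_p) all_const i|units].
  by apply/unitP; apply: (loc_const_var_init order_gt prime_p); apply: all_const.
apply/(loc_map_surjectiveP idealI prime_p) => m.
apply: (loc_const_mpoly idealI prime_p) => G _ j _.
by apply: (loc_const_var order_gt idealI prime_p) => i; apply/unitP.
Qed.
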